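(* Let $0<p<e^{-1}$ and let $\bar Q=(\bar q_{j,k})_{j,k\geq1}$ be the generator on $\mathbb N=\{1,2,\dots\}$ with $\bar q_{j,k}=\binom{j-1}{k-1}p^k(1-p)^{j-k}$ for $1\leq k\leq j-1$, $\bar q_{j,j+1}=(j+1)p$, $\bar q_{j,j}=p^j-(2+j)p$, and $\bar q_{j,k}=0$ otherwise. Then $\bar Q$ is positive recurrent. *)

From HB Require Import structures.
From mathcomp Require Import all_boot all_order all_algebra.
From mathcomp Require Import all_classical all_reals all_analysis.
Set Implicit Arguments. Unset Strict Implicit. Unset Printing Implicit Defensive.
Import Order.TTheory GRing.Theory Num.Theory.
Local Open Scope classical_set_scope.
Local Open Scope ring_scope.

(* We develop the standard notions (Norris, Markov
   Chains, ch. 2-3) for the minimal continuous-time chain via its jump chain. *)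
Section CTMC.
Variable R : realType.
Implicit Types (Q : nat -> nat -> R) (S : set nat).

Definition jump_rate Q i : R := - Q i i.

Definition jump_matrix Q i j : R :=
  if jump_rate Q i == 0 then (i == j)%:R
  else if i == j then 0 else Q i j / jump_rate Q i.

Fixpoint path_prob Q (x : nat) (s : seq nat) : R :=
  if s is y :: s' then jump_matrix Q x y * path_prob Q y s' else 1.

(* first-return paths of the jump chain to i inside S:
   s = [x1; ...; xn], n >= 1, xn = i, x1 .. x(n-1) <> i *)
Definition first_return_paths S (i : nat) : set (seq nat) :=
  [set s | s != [::] /\ last i s = i /\
           all (fun x => x != i) (behead (belast i s)) /\
           (forall x, x \in s -> S x)].

(* expected total holding time along a path started at i: the chain
   spends mean time 1/q_x in each state x = X_0 (=i), ..., X_{n-1} *)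
Definition path_mean_time Q (i : nat) (s : seq nat) : R :=
  \sum_(x <- belast i s) (jump_rate Q x)^-1.

Definition return_prob Q S i : \bar R :=
  \esum_(s in first_return_paths S i) (path_prob Q i s)%:E.

Definition mean_return_time Q S i : \bar R :=
  \esum_(s in first_return_paths S i)
     (path_prob Q i s * path_mean_time Q i s)%:E.

Definition recurrent_state Q S i : Prop := return_prob Q S i = 1%E.

Definition positive_recurrent_state Q S i : Prop :=
  recurrent_state Q S i /\ (mean_return_time Q S i < +oo)%E.

Definition positive_recurrent Q S : Prop :=
  forall i, S i -> positive_recurrent_state Q S i.

End CTMC.

(* The generator \bar Q on N = {1,2,...} from the paper (0 outside N). *)
Definition Qbar (R : realType) (p : R) (j k : nat) : R :=
  if (0 < j)%N then
    if (1 <= k <= j - 1)%N then 'C(j - 1, k - 1)%:R * p ^+ k * (1 - p) ^+ (j - k)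
    else if k == j.+1 then (j.+1)%:R * p
    else if k == j then p ^+ j - (2 + j)%:R * p
    else 0
  else 0.

Definition Nat1 : set nat := [set n | (0 < n)%N].

(* The minimal chain of [Qbar p] is skip-free upwards
   (from [x] it jumps to at most [x + 1]) and its jump rates grow at most
   linearly, [q_x <= 3 p x]. A Foster-Lyapunov function [V >= 0] with
   [(Qbar V)(x) <= -1] for [x != i] bounds by [V] the mean time the chain
   spends before it returns to [i]; hence the mean return time is finite.
   That same bounded mean time is at least the sum over [m] of
   P(no return within [m] jumps) / (3 p (i + m)), and the harmonic series
   diverges, so the chain returns to [i] almost surely.
   For [Qbar p], [V] is linear below [i] and [C ln y + E] above it. From [y]
   the chain moves up at rate [(y + 1) p] and, at rate [p], to
   [1 + Bin(y - 1, p)]; since E ln (1 + Bin(n, p)) <= ln (1 + n p) by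
   Jensen, the logarithmic part of the drift tends to [C p (1 + ln p)],
   which is negative exactly when [p < e^-1]. *)

From HB Require Import structures.
From mathcomp Require Import all_boot all_order all_algebra.
From mathcomp Require Import all_classical all_reals all_analysis.
From mathcomp Require Import ring lra zify.
Import Order.TTheory GRing.Theory Num.Theory.
Local Open Scope ring_scope.

Lemma ln_le_tangent {R : realType} (a b : R) :
  0 < a -> 0 < b -> ln a <= ln b + (a / b - 1).
Proof.
move=> a_gt0 b_gt0; rewrite -lerBlDl -lnV ?posrE // -lnM ?posrE ?invr_gt0 //.
by rewrite -[X in ln X](subrK 1) addrC le_ln1Dx // ltrBrDl subrr divr_gt0.
Qed.

Section BinomialMoments.
Variables (R : realType) (p : R).

Lemma binomial_pmfE n k :
  binomial_pmf n p k = 'C(n, k)%:R * p ^+ k * (1 - p) ^+ (n - k).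
Proof. by rewrite -mulrA mulr_natl. Qed.

Lemma binomial_pmf_sum n : \sum_(k < n.+1) binomial_pmf n p k = 1.
Proof.
rewrite -(expr1n R n) -[1](subrK p) exprDn.
by apply: eq_bigr => k _; rewrite binomial_pmfE -mulrA mulr_natl mulrC.
Qed.

Lemma binomial_pmf_mean n : \sum_(k < n.+1) binomial_pmf n p k * k%:R = n%:R * p.
Proof.
case: n => [|n]; first by rewrite big_ord_recl big_ord0 !mulr0 mul0r addr0.
rewrite big_ord_recl mulr0 add0r.
transitivity (n.+1%:R * p * \sum_(k < n.+1) binomial_pmf n p k);
  last by rewrite binomial_pmf_sum mulr1.
rewrite mulr_sumr.
apply: eq_bigr => k _; rewrite !binomial_pmfE lift0 subSS exprS.
have bin_diag : ('C(n.+1, k.+1)%:R * k.+1%:R : R) = n.+1%:R * 'C(n, k)%:R.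
  by rewrite -!natrM mulnC -mul_bin_diag.
transitivity (p * p ^+ k * (1 - p) ^+ (n - k) * ('C(n.+1, k.+1)%:R * k.+1%:R)); first ring.
rewrite bin_diag; ring.
Qed.

Lemma binomial_pmf0 n : binomial_pmf n p 0 = (1 - p) ^+ n.
Proof. by rewrite binomial_pmfE bin0 expr0 subn0 mulr1 mulr1n mul1r. Qed.

Hypothesis p01 : 0 <= p <= 1.

Lemma binomial_expect_ln n :
  \sum_(k < n.+1) binomial_pmf n p k * ln k.+1%:R <= ln (1 + n%:R * p).
Proof.
set mu := 1 + n%:R * p.
have mu_gt0 : 0 < mu by rewrite ltr_pwDl // mulr_ge0 //; case/andP: p01.
apply: le_trans (_ : \sum_(k < n.+1) binomial_pmf n p k * (ln mu + (k.+1%:R / mu - 1)) <= _).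
  apply: ler_sum => k _; apply: ler_wpM2l; first exact: binomial_pmf_ge0.
  exact: ln_le_tangent.
under eq_bigr do rewrite -natr1 mulrDl mul1r.
have -> : \sum_(k < n.+1) binomial_pmf n p k * (ln mu + (k%:R / mu + mu^-1 - 1)) =
   (ln mu + mu^-1 - 1) * \sum_(k < n.+1) binomial_pmf n p k
   + mu^-1 * \sum_(k < n.+1) binomial_pmf n p k * k%:R.
  rewrite !mulr_sumr -big_split /=; apply: eq_bigr => k _; ring.
have mu_np : n%:R * p = mu - 1 by rewrite /mu addrAC subrr add0r.
rewrite binomial_pmf_sum binomial_pmf_mean mu_np le_eqVlt; apply/orP; left.
by apply/eqP; field; rewrite gt_eqF.
Qed.

End BinomialMoments.

Local Open Scope classical_set_scope.

Section ReturnPaths.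
Variable i : nat.
Hypothesis i_gt0 : (0 < i)%N.
Local Notation FRP := (first_return_paths Nat1 i).

Fixpoint return_paths (M n : nat) : seq (seq nat) :=
  if n is n'.+1 then
    [:: i] :: [seq y :: t | y <- [seq y <- iota 1 M | y != i], t <- return_paths M n']
  else [::].

Lemma big_return_pathsS (R : nmodType) (f : seq nat -> R) M n :
  \sum_(t <- return_paths M n.+1) f t =
  f [:: i] + \sum_(y <- iota 1 M | y != i) \sum_(t <- return_paths M n) f (y :: t).
Proof. by rewrite /= big_cons big_allpairs_dep big_filter. Qed.

Lemma first_return_paths1 : FRP [:: i].
Proof. by split=> //; split=> //; split=> // x; rewrite inE => /eqP ->. Qed.

Lemma first_return_paths_cons y s :
  (0 < y)%N -> y != i -> s != [::] -> FRP s -> FRP (y :: s).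
Proof.
case: s => // a s y_gt0 yi _ [_ [last_s [avoid_s in_s]]].
split=> //; split=> //; split=> /=; first by rewrite yi.
by move=> x; rewrite inE => /predU1P[->|/in_s].
Qed.

Lemma first_return_pathsP {y s} : FRP (y :: s) ->
  s = [::] /\ y = i \/ [/\ s != [::], y != i, (0 < y)%N & FRP s].
Proof.
case: s => [|a s] [_ [last_s [avoid_s in_s]]]; first by left.
move: avoid_s => /= /andP[yi avoid_s]; right; split => //.
  by apply: in_s; rewrite mem_head.
by split=> //; split=> //; split=> // x xs; apply: in_s; rewrite inE xs orbT.
Qed.

Lemma return_paths_sub M n t : t \in return_paths M n -> FRP t /\ t != [::].
Proof.
elim: n t => [|n IH] t //=; rewrite inE => /predU1P[->|].
  exact: conj first_return_paths1 _.
case/allpairsP=> -[y s] [/= + /IH[FRP_s s_nil] ->].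
rewrite mem_filter mem_iota => /andP[yi /andP[y_gt0 _]].
by split => //; apply: first_return_paths_cons.
Qed.

Lemma return_paths_uniq M n : uniq (return_paths M n).
Proof.
elim: n => [|n IH] //=; apply/andP; split.
  apply/allpairsP => -[[y s] [/= _ /return_paths_sub[_ s_nil] [_ s_eq]]].
  by rewrite -s_eq in s_nil.
apply: allpairs_uniq => //; first by rewrite filter_uniq // iota_uniq.
by move=> [y s] [y' s'] _ _ /= [-> ->].
Qed.

Lemma mem_return_paths M n t : FRP t -> (size t <= n)%N ->
  all (fun y => y <= M)%N t -> t \in return_paths M n.
Proof.
elim: n t => [|n IH] [|y s] FRP_t //=; try by case: FRP_t.
case: (first_return_pathsP FRP_t) => [[-> ->]|[s_nil yi y_gt0 FRP_s]].
  by rewrite mem_head.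
rewrite ltnS => size_s /andP[yM sM]; rewrite inE; apply/orP; right.
apply/allpairsP; exists (y, s); split => //=; last exact: IH.
by rewrite mem_filter yi mem_iota y_gt0 add1n ltnS.
Qed.

Lemma finite_first_return_paths_sub (A : set (seq nat)) : finite_set A -> A `<=` FRP ->
  exists M n, A `<=` [set` return_paths M n].
Proof.
move=> /finite_seqP[s ->] sFRP.
exists (\max_(t <- s) \max_(y <- t) y), (\max_(t <- s) size t) => t /= ts.
apply: mem_return_paths; first exact: sFRP.
  exact: leq_bigmax_seq.
apply/allP => y yt; apply: (@leq_trans (\max_(z <- t) z)).
  exact: leq_bigmax_seq.
exact: (leq_bigmax_seq (P := xpredT) (F := fun t : seq nat => \max_(z <- t) z)).
Qed.

Variables (R : realType) (g : seq nat -> R).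

Lemma esum_first_return_paths_ge M n :
  ((\sum_(t <- return_paths M n) g t)%:E <= \esum_(t in FRP) (g t)%:E)%E.
Proof.
apply: esum_ge; exists [set` return_paths M n].
  by split; [exact: finite_seq | move=> t /return_paths_sub[]].
by rewrite -sumEFin fsbig_seq // return_paths_uniq.
Qed.

Lemma esum_first_return_paths_le (B : R) : (forall t, 0 <= g t) ->
  (forall M n, \sum_(t <- return_paths M n) g t <= B) ->
  (\esum_(t in FRP) (g t)%:E <= B%:E)%E.
Proof.
move=> g_ge0 g_le; apply: ge_ereal_sup => /= _ [A [finA A_FRP] <-].
have [M [n A_sub]] := finite_first_return_paths_sub _ finA A_FRP.
apply: (@le_trans _ _ (\sum_(t \in [set` return_paths M n]) (g t)%:E)%R).
  apply: lee_fsum_nneg_subset => //; first exact: finite_seq.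
    by move=> t; rewrite !inE => /A_sub.
  by move=> t _; rewrite lee_fin.
by rewrite -fsbig_seq ?return_paths_uniq // sumEFin lee_fin.
Qed.

End ReturnPaths.

Lemma series_harmonic_unbounded (R : realType) (A : R) :
  exists n, A < series harmonic n.
Proof.
have harmonic_nd : nondecreasing_seq (series (@harmonic R)).
  by apply: nondecreasing_series => n _ _; exact: harmonic_ge0.
have /cvgryPge/(_ (A + 1)) := nondecreasing_dvgn_lt harmonic_nd (@dvg_harmonic R).
case=> N _ /(_ N (leqnn N)) /= A1_le; exists N.
by apply: lt_le_trans A1_le; rewrite ltrDl.
Qed.

Section SupportSums.
Variables (R : realType) (G : nat -> R) (N : nat).
Hypothesis G_ge0 : forall y, 0 <= G y.
Hypothesis G_supp : forall y, (N < y)%N -> G y = 0.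

Lemma sum_ord_supp_eq K : (N < K)%N -> \sum_(y < K) G y = \sum_(y < N.+1) G y.
Proof.
move=> NK; rewrite -!(big_mkord xpredT) (big_cat_nat (n := N.+1)) //=.
rewrite [X in _ + X]big1_seq ?addr0 // => y /andP[_].
by rewrite mem_index_iota => /andP[Ny _]; apply: G_supp.
Qed.

Lemma sum_ord_supp_le K : \sum_(y < K) G y <= \sum_(y < N.+1) G y.
Proof.
case: (leqP K N.+1) => [KN|NK]; last by rewrite (sum_ord_supp_eq _ (ltnW NK)).
by rewrite -!(big_mkord xpredT) [leRHS](big_cat_nat (n := K)) //= lerDl sumr_ge0.
Qed.

End SupportSums.

Section SkipFreeGenerator.
Variables (R : realType) (Q : nat -> nat -> R).
Hypothesis jump_rate_ge0 : forall x, 0 <= jump_rate Q x.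
Hypothesis jump_rate_gt0 : forall x, (0 < x)%N -> 0 < jump_rate Q x.
Hypothesis Q_ge0 : forall x y, x != y -> 0 <= Q x y.
Hypothesis Q_to0 : forall x, Q x 0 = 0.
Hypothesis Q_skip_free : forall x y, (x.+1 < y)%N -> Q x y = 0.
Hypothesis Q_conservative : forall x, (0 < x)%N -> \sum_(y < x.+2) Q x y = 0.

Local Notation P := (jump_matrix Q).

Lemma jump_matrix_ge0 x y : 0 <= P x y.
Proof.
rewrite /jump_matrix; case: eqP => _; first exact: ler0n.
by case: eqP => // /eqP xy; rewrite divr_ge0 ?Q_ge0.
Qed.

Lemma jump_matrixE x y : (0 < x)%N ->
  P x y = if x == y then 0 else Q x y / jump_rate Q x.
Proof. by move=> x_gt0; rewrite /jump_matrix gt_eqF ?jump_rate_gt0. Qed.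

Lemma jump_matrix_to0 x : (0 < x)%N -> P x 0 = 0.
Proof. by move=> x_gt0; rewrite jump_matrixE // Q_to0 mul0r if_same. Qed.

Lemma jump_matrix_skip_free x y : (0 < x)%N -> (x.+1 < y)%N -> P x y = 0.
Proof. by move=> x_gt0 xy; rewrite jump_matrixE // Q_skip_free // mul0r if_same. Qed.

Lemma jump_matrix_expect x (g : nat -> R) : (0 < x)%N ->
  \sum_(y < x.+2) P x y * g y = (\sum_(y < x.+2) Q x y * g y) / jump_rate Q x + g x.
Proof.
move=> x_gt0; have q_neq0 := lt0r_neq0 (jump_rate_gt0 _ x_gt0).
have Qxx : Q x x = - jump_rate Q x by rewrite /jump_rate opprK.
pose x' : 'I_x.+2 := Ordinal (leqnSn x.+1).
rewrite (bigD1 x') // [in RHS](bigD1 x') //= jump_matrixE // eqxx mul0r add0r mulrDl Qxx.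
rewrite mulrAC mulNr divff // mulN1r addrAC addNr add0r mulr_suml.
apply: eq_bigr => y yx; rewrite jump_matrixE // mulrAC; congr (_ * _).
suff /negbTE -> : x != y by [].
by apply: contra yx => /eqP xy; apply/eqP/val_inj.
Qed.

Lemma jump_matrix_row_sum x : (0 < x)%N -> \sum_(y < x.+2) P x y = 1.
Proof.
move=> x_gt0; have := @jump_matrix_expect x (fun=> 1) x_gt0.
under eq_bigr do rewrite mulr1; under [in RHS]eq_bigr do rewrite mulr1.
by rewrite Q_conservative // mul0r add0r.
Qed.

Variable i : nat.
Hypothesis i_gt0 : (0 < i)%N.

Definition hit_prob M n x := \sum_(t <- return_paths i M n) path_prob Q x t.

Definition hit_time M n x :=
  \sum_(t <- return_paths i M n) path_prob Q x t * path_mean_time Q x t.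

(* The jump chain from [x] makes [n] jumps inside [[1, M] \ {i}] with
   probability [avoid_prob M n x]; [avoid_time M n x] is the mean holding
   time it accumulates in its first [n] states before it leaves
   [[1, M] \ {i}]. *)
Fixpoint avoid_prob M n x : R :=
  if n is n'.+1 then \sum_(y <- iota 1 M | y != i) P x y * avoid_prob M n' y
  else 1.

Fixpoint avoid_time M n x : R :=
  if n is n'.+1 then
    (jump_rate Q x)^-1 + \sum_(y <- iota 1 M | y != i) P x y * avoid_time M n' y
  else 0.

Lemma path_prob_ge0 x t : 0 <= path_prob Q x t.
Proof.
elim: t x => [|y t IH] x /=; first exact: ler01.
exact: mulr_ge0 (jump_matrix_ge0 _ _) (IH _).
Qed.

Lemma path_mean_time_ge0 x t : 0 <= path_mean_time Q x t.
Proof. by apply: sumr_ge0 => y _; rewrite invr_ge0. Qed.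

Lemma hit_probS M n x :
  hit_prob M n.+1 x = P x i + \sum_(y <- iota 1 M | y != i) P x y * hit_prob M n y.
Proof.
rewrite /hit_prob big_return_pathsS /= mulr1; congr (_ + _).
by apply: eq_bigr => y _; rewrite mulr_sumr.
Qed.

Lemma hit_timeS M n x : hit_time M n.+1 x =
  P x i / jump_rate Q x + \sum_(y <- iota 1 M | y != i)
    P x y * (hit_prob M n y / jump_rate Q x + hit_time M n y).
Proof.
rewrite /hit_time big_return_pathsS /= mulr1 /path_mean_time /= big_seq1.
congr (_ + _); apply: eq_bigr => y _.
rewrite /hit_prob mulr_suml -big_split mulr_sumr /=.
by apply: eq_bigr => t _; rewrite big_cons; ring.
Qed.

Let avoid_part (h : nat -> R) x y := if y != i then P x y * h y else 0.

Let avoid_sumE (h : nat -> R) M x : (0 < x)%N ->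
  \sum_(y <- iota 1 M | y != i) P x y * h y = \sum_(y < M.+1) avoid_part h x y.
Proof.
move=> x_gt0; rewrite -(big_mkord xpredT) big_ltn // /avoid_part jump_matrix_to0 //.
by rewrite mul0r if_same add0r big_mkcond /index_iota subSS subn0.
Qed.

Let row_sumE (h : nat -> R) x : (0 < x)%N ->
  \sum_(y < x.+2) P x y * h y = P x i * h i + \sum_(y < x.+2) avoid_part h x y.
Proof.
move=> x_gt0; rewrite (bigID (fun y : 'I_x.+2 => y == i :> nat)) /=.
rewrite (big_ord1_eq _ (fun y => P x y * h y)).
congr (_ + _); last first.
  by rewrite big_mkcond; apply: eq_bigr => y _; rewrite /avoid_part; case: ifP.
by case: ltnP => // ix; rewrite jump_matrix_skip_free ?mul0r.
Qed.

Let avoid_part_supp (h : nat -> R) x y : (0 < x)%N -> (x.+1 < y)%N ->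
  avoid_part h x y = 0.
Proof. by move=> x_gt0 xy; rewrite /avoid_part jump_matrix_skip_free // mul0r if_same. Qed.

Lemma avoid_row_le (h : nat -> R) M x : (0 < x)%N -> (forall y, 0 <= h y) ->
  P x i * h i + \sum_(y <- iota 1 M | y != i) P x y * h y <=
  \sum_(y < x.+2) P x y * h y.
Proof.
move=> x_gt0 h_ge0; rewrite avoid_sumE // row_sumE // lerD2l.
apply: sum_ord_supp_le => [y|y]; last exact: avoid_part_supp.
by rewrite /avoid_part; case: ifP => // _; rewrite mulr_ge0 ?jump_matrix_ge0.
Qed.

Lemma avoid_row_eq (h : nat -> R) M x : (0 < x)%N -> (x < M)%N ->
  P x i * h i + \sum_(y <- iota 1 M | y != i) P x y * h y =
  \sum_(y < x.+2) P x y * h y.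
Proof.
move=> x_gt0 xM; rewrite avoid_sumE // row_sumE //; congr (_ + _).
by apply: sum_ord_supp_eq => // y; exact: avoid_part_supp.
Qed.

Lemma avoid_row_le1 M x : (0 < x)%N ->
  P x i + \sum_(y <- iota 1 M | y != i) P x y <= 1.
Proof.
move=> x_gt0; rewrite -(@jump_matrix_row_sum x x_gt0).
have := avoid_row_le (fun=> 1) M x x_gt0 (fun=> ler01).
by rewrite mulr1; under eq_bigr do rewrite mulr1; under [leRHS]eq_bigr do rewrite mulr1.
Qed.

Lemma ler_avoid_sum (h1 h2 : nat -> R) M x :
  (forall y, (0 < y)%N -> y != i -> h1 y <= h2 y) ->
  \sum_(y <- iota 1 M | y != i) P x y * h1 y <=
  \sum_(y <- iota 1 M | y != i) P x y * h2 y.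
Proof.
move=> h12; rewrite big_seq_cond [leRHS]big_seq_cond; apply: ler_sum => y.
rewrite mem_iota => /andP[/andP[y_gt0 _] yi].
by rewrite ler_wpM2l ?jump_matrix_ge0 ?h12.
Qed.

Lemma hit_prob_le1 M n x : (0 < x)%N -> hit_prob M n x <= 1.
Proof.
elim: n x => [|n IH] x x_gt0; first by rewrite /hit_prob big_nil ler01.
apply: le_trans (@avoid_row_le1 M x x_gt0); rewrite hit_probS lerD2l.
apply: le_trans (@ler_avoid_sum _ (fun=> 1) M x _) _ => [y y_gt0 _|]; first exact: IH.
by under eq_bigr do rewrite mulr1.
Qed.

Lemma hit_time_le_avoid_time M n x : (0 < x)%N -> hit_time M n x <= avoid_time M n x.
Proof.
elim: n x => [|n IH] x x_gt0; first by rewrite /hit_time big_nil.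
set c := (jump_rate Q x)^-1.
have c_ge0 : 0 <= c by rewrite invr_ge0.
rewrite hit_timeS /=.
apply: le_trans (_ : P x i * c + \sum_(y <- iota 1 M | y != i)
    P x y * (c + avoid_time M n y) <= _).
  rewrite lerD2l; apply: ler_avoid_sum => y y_gt0 _; apply: lerD (IH y y_gt0).
  by rewrite -[leRHS]mul1r ler_wpM2r ?hit_prob_le1.
rewrite (eq_bigr (fun y => P x y * c + P x y * avoid_time M n y)); last first.
  by move=> y _; rewrite mulrDr.
rewrite big_split /= -mulr_suml addrA -mulrDl.
by rewrite lerD2r -[leRHS]mul1r ler_wpM2r ?avoid_row_le1.
Qed.

Lemma avoid_prob_ge0 M n x : 0 <= avoid_prob M n x.
Proof.
elim: n x => [|n IH] x /=; first exact: ler01.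
by apply: sumr_ge0 => y _; rewrite mulr_ge0 ?jump_matrix_ge0.
Qed.

Lemma avoid_prob_nonincreasing M x : (0 < x)%N -> nonincreasing_seq (avoid_prob M ^~ x).
Proof.
move=> x_gt0; apply/nonincreasing_seqP => n; elim: n x x_gt0 => [|n IH] x x_gt0 /=.
  have := @avoid_row_le1 M x x_gt0; under eq_bigr do rewrite mulr1.
  by apply: le_trans; rewrite lerDr jump_matrix_ge0.
by apply: ler_avoid_sum => y y_gt0 _; exact: IH.
Qed.

Lemma hit_prob_add_avoid_prob M n x : (0 < x)%N -> (x + n <= M)%N ->
  hit_prob M n x + avoid_prob M n x = 1.
Proof.
elim: n x => [|n IH] x x_gt0 xnM; first by rewrite /hit_prob big_nil add0r.
have xM : (x < M)%N by rewrite (leq_trans _ xnM) // addnS ltnS leq_addr.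
rewrite hit_probS /= -addrA -big_split /=.
rewrite -big_filter (eq_big_seq (fun y => P x y * 1)) => [|y]; last first.
  rewrite mem_filter mem_iota -mulrDr => /andP[_ /andP[y_gt0 _]].
  case: (leqP y x.+1) => [yx|xy]; last by rewrite jump_matrix_skip_free ?mul0r.
  by rewrite IH // (leq_trans _ xnM) // addnS -addSn leq_add2r.
rewrite big_filter -[P x i]mulr1 avoid_row_eq //.
by under eq_bigr do rewrite mulr1; exact: jump_matrix_row_sum.
Qed.

Lemma avoid_sum_le_row (h : nat -> R) M x : (0 < x)%N -> (forall y, 0 <= h y) ->
  \sum_(y <- iota 1 M | y != i) P x y * h y <= \sum_(y < x.+2) P x y * h y.
Proof.
move=> x_gt0 h_ge0; apply: le_trans (avoid_row_le h M x x_gt0 h_ge0).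
by rewrite lerDr mulr_ge0 ?jump_matrix_ge0.
Qed.

Variable V : nat -> R.
Hypothesis V_ge0 : forall y, 0 <= V y.
Hypothesis V_drift :
  forall x, (0 < x)%N -> x != i -> \sum_(y < x.+2) Q x y * V y <= -1.

Lemma jump_chain_drift x : (0 < x)%N -> x != i ->
  (jump_rate Q x)^-1 + \sum_(y < x.+2) P x y * V y <= V x.
Proof.
move=> x_gt0 xi; rewrite jump_matrix_expect // addrA gerDr -[X in X + _]mul1r -mulrDl.
by rewrite mulr_le0_ge0 ?invr_ge0 // -lerBrDl sub0r V_drift.
Qed.

Definition return_time_bound := (jump_rate Q i)^-1 + \sum_(y < i.+2) P i y * V y.

Lemma return_time_bound_ge0 : 0 <= return_time_bound.
Proof.
by rewrite addr_ge0 ?invr_ge0 // sumr_ge0 // => y _; rewrite mulr_ge0 ?jump_matrix_ge0.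
Qed.

Lemma avoid_time_le_lyapunov M n x : (0 < x)%N -> x != i -> avoid_time M n x <= V x.
Proof.
elim: n x => [|n IH] x x_gt0 xi /=; first exact: V_ge0.
apply: le_trans (jump_chain_drift x x_gt0 xi); rewrite lerD2l.
apply: le_trans (avoid_sum_le_row V M x x_gt0 V_ge0).
by apply: ler_avoid_sum => y y_gt0 yi; exact: IH.
Qed.

Lemma avoid_time_le_bound M n : avoid_time M n i <= return_time_bound.
Proof.
case: n => [|n] /=; first exact: return_time_bound_ge0.
rewrite lerD2l; apply: le_trans (avoid_sum_le_row V M i i_gt0 V_ge0).
by apply: ler_avoid_sum => y y_gt0 yi; exact: avoid_time_le_lyapunov.
Qed.

Lemma mean_return_time_le : (mean_return_time Q Nat1 i <= return_time_bound%:E)%E.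
Proof.
apply: esum_first_return_paths_le => // [t|M n].
  by rewrite mulr_ge0 ?path_prob_ge0 ?path_mean_time_ge0.
exact: le_trans (hit_time_le_avoid_time M n i i_gt0) (avoid_time_le_bound M n).
Qed.

Variable c : R.
Hypothesis jump_rate_le : forall x, (0 < x)%N -> jump_rate Q x <= c * x%:R.

Let c_gt0 : 0 < c.
Proof.
by rewrite -[c]mulr1; exact: lt_le_trans (jump_rate_gt0 1 isT) (jump_rate_le 1 isT).
Qed.

Lemma avoid_time_ge M n x : (0 < x)%N ->
  \sum_(m < n) avoid_prob M m x / (c * (x + m)%:R) <= avoid_time M n x.
Proof.
elim: n x => [|n IH] x x_gt0; first by rewrite big_ord0.
rewrite big_ord_recl /= addn0 div1r; apply: lerD.
  by rewrite lef_pV2 ?posrE ?jump_rate_gt0 ?mulr_gt0 ?ltr0n ?jump_rate_le.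
apply: le_trans (ler_avoid_sum _ _ M x (fun y y_gt0 _ => IH y y_gt0)).
rewrite (eq_bigr (fun m : 'I_n => \sum_(y <- iota 1 M | y != i)
    P x y * (avoid_prob M m y / (c * (x + m.+1)%:R)))); last first.
  move=> m _; rewrite add0n (_ : bump 0 m = m.+1) // mulr_suml.
  by apply: eq_bigr => y _; rewrite mulrA.
rewrite exchange_big big_seq_cond [leRHS]big_seq_cond /=; apply: ler_sum => y.
rewrite mem_iota => /andP[/andP[y_gt0 _] _]; rewrite mulr_sumr; apply: ler_sum => m _.
case: (leqP y x.+1) => [yx|xy]; last by rewrite jump_matrix_skip_free ?mul0r.
rewrite ler_wpM2l ?jump_matrix_ge0 // ler_wpM2l ?avoid_prob_ge0 //.
rewrite lef_pV2 ?posrE ?mulr_gt0 ?ltr0n ?addn_gt0 ?x_gt0 ?y_gt0 //.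
by rewrite ler_pM2l // ler_nat addnS -addSn leq_add2r.
Qed.

Lemma avoid_prob_mul_harmonic_le n :
  avoid_prob (i + n) n i * series harmonic n <= c * i%:R * return_time_bound.
Proof.
apply: le_trans (_ : c * i%:R * \sum_(m < n) avoid_prob (i + n) m i / (c * (i + m)%:R) <= _).
  rewrite /series /= big_mkord !mulr_sumr; apply: ler_sum => m _.
  have i_pos : (0 : R) < i%:R by rewrite ltr0n.
  have im_pos : (0 : R) < (i + m)%:R by rewrite ltr0n addn_gt0 i_gt0.
  have -> : c * i%:R * (avoid_prob (i + n) m i / (c * (i + m)%:R)) =
            avoid_prob (i + n) m i * (i%:R / (i + m)%:R).
    by field; rewrite -natrD !gt_eqF.
  apply: ler_pM; rewrite ?avoid_prob_ge0 ?invr_ge0 //.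
    exact: avoid_prob_nonincreasing (ltnW (ltn_ord m)).
  rewrite -[_ / _]invf_div lef_pV2 ?posrE ?divr_gt0 // ler_pdivrMr // -natrM ler_nat.
  by rewrite mulSn leq_add2l leq_pmulr.
rewrite ler_pM2l ?mulr_gt0 ?ltr0n //.
exact: le_trans (avoid_time_ge _ _ _ i_gt0) (avoid_time_le_bound _ _).
Qed.

Lemma recurrent_state_of_drift : recurrent_state Q Nat1 i.
Proof.
apply/eqP; rewrite eq_le; apply/andP; split.
  apply: esum_first_return_paths_le => // [t|M n]; first exact: path_prob_ge0.
  exact: hit_prob_le1.
apply/lee_addgt0Pr => e e_gt0.
set K := c * i%:R * return_time_bound.
have K_ge0 : 0 <= K by rewrite /K !mulr_ge0 ?ler0n ?return_time_bound_ge0 // ltW.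
have [n Ke_lt] := series_harmonic_unbounded _ (K / e).
have H_gt0 : 0 < series (@harmonic R) n.
  by apply: le_lt_trans Ke_lt; rewrite divr_ge0 // ltW.
have avoid_le : avoid_prob (i + n) n i <= e.
  rewrite -(ler_pM2r H_gt0); apply: le_trans (avoid_prob_mul_harmonic_le n) _.
  by rewrite -/K [e * _]mulrC -ler_pdivrMr // ltW.
apply: le_trans (leeD2r _ (@esum_first_return_paths_ge i i_gt0 _ _ (i + n) n)).
rewrite -EFinD lee_fin -[leLHS](hit_prob_add_avoid_prob (i + n) n i i_gt0 (leqnn _)) lerD2l.
exact: avoid_le.
Qed.

Theorem positive_recurrent_state_of_drift : positive_recurrent_state Q Nat1 i.
Proof.
split; first exact: recurrent_state_of_drift.
exact: le_lt_trans mean_return_time_le (ltry _).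
Qed.

End SkipFreeGenerator.

Section QbarGenerator.
Variables (R : realType) (p : R).

Lemma Qbar_to0 x : Qbar p x 0 = 0.
Proof. by rewrite /Qbar; case: x => //= n; case: ifP. Qed.

Lemma Qbar_skip_free x y : (x.+1 < y)%N -> Qbar p x y = 0.
Proof.
move=> xy; rewrite /Qbar; case: ifP => // _.
by rewrite ifN ?ifN ?ifN //; [lia | lia | rewrite negb_and -ltnNge; lia].
Qed.

Lemma Qbar_below n m : (m < n)%N -> Qbar p n.+1 m.+1 = p * binomial_pmf n p m.
Proof.
move=> mn; rewrite /Qbar !subn1 /= mn subSS binomial_pmfE.
by rewrite exprS !mulrA [_ * p]mulrC.
Qed.

Lemma Qbar_up n : Qbar p n.+1 n.+2 = n.+2%:R * p.
Proof.
rewrite /Qbar /= subn1 /=; have -> : (n.+1 < n)%N = false by lia.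
by rewrite eqxx.
Qed.

Lemma Qbar_diag n : Qbar p n.+1 n.+1 = p ^+ n.+1 - n.+3%:R * p.
Proof.
rewrite /Qbar /= subn1 /= ltnn; have -> : (n.+1 == n.+2) = false by lia.
by rewrite eqxx.
Qed.

Lemma jump_rate_Qbar n : jump_rate (Qbar p) n.+1 = n.+3%:R * p - p ^+ n.+1.
Proof. by rewrite /jump_rate Qbar_diag opprB. Qed.

Lemma Qbar_row n (g : nat -> R) :
  \sum_(y < n.+3) Qbar p n.+1 y * g y =
  n.+2%:R * p * g n.+2 + p * \sum_(m < n.+1) binomial_pmf n p m * g m.+1
  - n.+3%:R * p * g n.+1.
Proof.
have pmf_nn : binomial_pmf n p n = p ^+ n.
  by rewrite binomial_pmfE binn subnn expr0 mulr1 mul1r.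
rewrite big_ord_recr big_ord_recr big_ord_recl /= Qbar_to0 mul0r add0r.
rewrite Qbar_up Qbar_diag [in RHS]big_ord_recr /= pmf_nn.
rewrite (eq_bigr (fun m : 'I_n => p * (binomial_pmf n p m * g m.+1))); last first.
  by move=> m _; rewrite (_ : bump 0 m = m.+1) // Qbar_below // mulrA.
rewrite -mulr_sumr exprS; ring.
Qed.

Lemma Qbar_conservative x : (0 < x)%N -> \sum_(y < x.+2) Qbar p x y = 0.
Proof.
case: x => // n _; have := Qbar_row n (fun=> 1).
under eq_bigr do rewrite mulr1; under [in RHS]eq_bigr do rewrite mulr1.
by rewrite binomial_pmf_sum => ->; rewrite -[n.+3]addn1 natrD; ring.
Qed.

Hypotheses (p_gt0 : 0 < p) (p_lt1 : p < 1).

Lemma Qbar_ge0 x y : x != y -> 0 <= Qbar p x y.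
Proof.
move=> xy; rewrite /Qbar; case: ifP => // _; case: ifP => _.
  by rewrite !mulr_ge0 ?ler0n ?exprn_ge0 // ?subr_ge0 ltW.
case: ifP => _; first by rewrite mulr_ge0 ?ltW.
by rewrite eq_sym (negbTE xy).
Qed.

Lemma jump_rate_Qbar_gt0 x : (0 < x)%N -> 0 < jump_rate (Qbar p) x.
Proof.
case: x => // n _; rewrite jump_rate_Qbar subr_gt0.
rewrite (@le_lt_trans _ _ p) ?ltr_pMl ?ltr1n //.
by rewrite exprS ger_pMr // exprn_ile1 ?ltW.
Qed.

Lemma jump_rate_Qbar_ge0 x : 0 <= jump_rate (Qbar p) x.
Proof.
by case: x => [|n]; [rewrite /jump_rate /Qbar oppr0 | exact/ltW/jump_rate_Qbar_gt0].
Qed.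

Lemma jump_rate_Qbar_le x : (0 < x)%N -> jump_rate (Qbar p) x <= 3 * p * x%:R.
Proof.
case: x => // n _; rewrite jump_rate_Qbar lerBlDr.
apply: le_trans (_ : 3 * p * n.+1%:R <= _); last by rewrite lerDl exprn_ge0 // ltW.
by rewrite mulrAC ler_pM2r // -natrM ler_nat; lia.
Qed.

End QbarGenerator.

Lemma expRN1_lt1 (R : realType) : expR (-1) < 1 :> R.
Proof. by rewrite expR_lt1 ltrN10. Qed.

Section QbarLyapunov.
Variables (R : realType) (p : R) (i : nat).
Hypotheses (p_gt0 : 0 < p) (p_lt_expRN1 : p < expR (-1)) (i_gt0 : (0 < i)%N).

Let p_lt1 : p < 1 := lt_trans p_lt_expRN1 (expRN1_lt1 R).

Definition log_gap : R := - (1 + ln p).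
Definition log_coef : R := 2 / (p * log_gap).
Definition lin_coef : R := (2 * p)^-1.
Definition gap_index : nat := (Num.truncn (4 / (p * log_gap))).+1.
Definition jump_gap : R := (1 + 2 * p * log_coef) / (p * (1 - p) ^+ gap_index).
Definition lyap_offset : R := lin_coef * (i%:R - 1) + jump_gap.

(* Linear below [i], logarithmic above; above [gap_index] the logarithm
   alone has drift [- p * log_coef * log_gap / 2 = -1], and below it the
   offset [jump_gap] is paid back by the jump to state [1], which happens
   at rate [p * (1 - p) ^+ n] from state [n.+1]. *)
Definition lyap (y : nat) : R :=
  if (y <= i)%N then lin_coef * (i%:R - y%:R)
  else log_coef * ln y%:R + lyap_offset.

(* By Jensen, [p * log_coef * log_drift n] bounds the drift of
   [log_coef * ln y] at [y = n.+1]. *)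
Definition log_drift (n : nat) : R :=
  n.+2%:R * (ln n.+2%:R - ln n.+1%:R) + (ln (1 + n%:R * p) - ln n.+1%:R).

Lemma log_gap_gt0 : 0 < log_gap.
Proof.
have : ln p < -1 by move: p_lt_expRN1; rewrite -ltr_ln ?posrE ?expR_gt0 // expRK.
by rewrite /log_gap; lra.
Qed.

Lemma log_coef_gt0 : 0 < log_coef.
Proof. by rewrite divr_gt0 // mulr_gt0 // log_gap_gt0. Qed.

Lemma log_coefE : p * log_coef * log_gap = 2.
Proof.
rewrite /log_coef; have := log_gap_gt0; move: log_gap => d d_gt0.
by field; rewrite !gt_eqF.
Qed.

Lemma lin_coef_gt0 : 0 < lin_coef.
Proof. by rewrite invr_gt0 mulr_gt0. Qed.

Lemma jump_gap_gt0 : 0 < jump_gap.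
Proof.
apply: divr_gt0; first by rewrite addr_gt0 // mulr_gt0 ?log_coef_gt0 // mulr_gt0.
by rewrite mulr_gt0 // exprn_gt0 // subr_gt0.
Qed.

Let log_coef_ge0 := ltW log_coef_gt0.
Let lin_coef_ge0 := ltW lin_coef_gt0.
Let jump_gap_ge0 := ltW jump_gap_gt0.

Lemma lyap_offset_ge : lin_coef * (i%:R - 1) <= lyap_offset.
Proof. by rewrite lerDl. Qed.

Lemma lyap_log y : (i < y)%N -> lyap y = log_coef * ln y%:R + lyap_offset.
Proof. by rewrite /lyap ltnNge => /negbTE ->. Qed.

Lemma lyap_ge0 y : 0 <= lyap y.
Proof.
have lin_ge0 : 0 <= lin_coef * (i%:R - 1) by rewrite mulr_ge0 // subr_ge0 ler1n.
rewrite /lyap; case: ifP => [yi|iy]; first by rewrite mulr_ge0 // subr_ge0 ler_nat.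
rewrite addr_ge0 ?(le_trans lin_ge0 lyap_offset_ge) // mulr_ge0 // ln_ge0 // ler1n.
by move/negbT: iy; rewrite -ltnNge; lia.
Qed.

Lemma lyap_le_log m :
  lyap m.+1 <= log_coef * ln m.+1%:R + lyap_offset - (m == 0)%:R * jump_gap.
Proof.
case: m => [|m].
  by rewrite /lyap i_gt0 ln1 mulr0 add0r mul1r /lyap_offset addrK.
rewrite mulr0n mul0r subr0 /lyap; case: ifP => // m_le_i.
apply: (@le_trans _ _ lyap_offset); last by rewrite lerDr mulr_ge0 // ln_ge0 // ler1n.
by apply: le_trans lyap_offset_ge; rewrite ler_pM2l ?lin_coef_gt0 // lerD2l lerN2 ler1n.
Qed.

Lemma binomial_expect_lyap n :
  \sum_(m < n.+1) binomial_pmf n p m * lyap m.+1 <=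
  log_coef * ln (1 + n%:R * p) + lyap_offset - (1 - p) ^+ n * jump_gap.
Proof.
have p01 : 0 <= p <= 1 by rewrite !ltW.
apply: le_trans (_ : \sum_(m < n.+1) binomial_pmf n p m *
    (log_coef * ln m.+1%:R + lyap_offset - (m == 0 :> nat)%:R * jump_gap) <= _).
  by apply: ler_sum => m _; rewrite ler_wpM2l ?binomial_pmf_ge0 ?lyap_le_log.
rewrite (eq_bigr (fun m : 'I_n.+1 => log_coef * (binomial_pmf n p m * ln m.+1%:R)
    + lyap_offset * binomial_pmf n p m - (m == 0 :> nat)%:R * binomial_pmf n p m * jump_gap));
  last by move=> m _; ring.
rewrite !big_split sumrN /= -!mulr_sumr -mulr_suml binomial_pmf_sum mulr1.
have -> : \sum_(m < n.+1) (m == 0 :> nat)%:R * binomial_pmf n p m = (1 - p) ^+ n.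
  rewrite big_ord_recl big1 => [|m _]; last by rewrite lift0 /= mulr0n mul0r.
  by rewrite addr0 /= mulr1n mul1r binomial_pmf0.
rewrite lerD2r lerD2r ler_pM2l ?log_coef_gt0 //.
exact: binomial_expect_ln.
Qed.

Lemma binomial_expect_lyap_lin n : (n < i)%N ->
  \sum_(m < n.+1) binomial_pmf n p m * lyap m.+1 = lin_coef * (i%:R - 1 - n%:R * p).
Proof.
move=> n_lt_i.
transitivity (\sum_(m < n.+1)
    lin_coef * ((i%:R - 1) * binomial_pmf n p m - binomial_pmf n p m * m%:R)).
  apply: eq_bigr => m _; rewrite /lyap ifT; last by have := ltn_ord m; lia.
  by rewrite -natr1; ring.
by rewrite -mulr_sumr sumrB -mulr_sumr binomial_pmf_sum binomial_pmf_mean mulr1.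
Qed.

Lemma drift_below n : (n.+1 < i)%N ->
  \sum_(y < n.+3) Qbar p n.+1 y * lyap y <= -1.
Proof.
move=> n_lt_i; rewrite Qbar_row binomial_expect_lyap_lin; last lia.
rewrite /lyap !ifT; [|lia|lia].
set E := (X in X <= _).
have -> : E = -1 - n%:R * p / 2.
  by rewrite /E /lin_coef -!natr1; field; rewrite gt_eqF.
by rewrite gerDl oppr_le0 divr_ge0 // mulr_ge0 // ltW.
Qed.

Lemma log_increment_le n : n.+2%:R * (ln n.+2%:R - ln n.+1%:R) <= 1 + n.+1%:R^-1 :> R.
Proof.
have inv_n1 : n.+2%:R / n.+1%:R = 1 + n.+1%:R^-1 :> R.
  by rewrite -natr1 mulrDl divff ?mul1r // pnatr_eq0.
have := ln_le_tangent _ _ (ltr0Sn R n.+1) (ltr0Sn R n).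
rewrite inv_n1 addrAC subrr add0r -lerBlDl => ln_incr.
by apply: le_trans (ler_wpM2l (ler0n R n.+2) ln_incr) _; rewrite -inv_n1.
Qed.

Lemma ln_mean_le0 n : ln (1 + n%:R * p) - ln n.+1%:R <= 0.
Proof.
rewrite subr_le0 ler_ln ?posrE ?ltr0Sn //; last by rewrite ltr_pwDl // mulr_ge0 // ltW.
by rewrite -natr1 addrC lerD2r ler_piMr // ltW.
Qed.

Lemma ln_mean_le n : ln (1 + n%:R * p) - ln n.+1%:R <= ln p + (n.+1%:R * p)^-1.
Proof.
have np_gt0 : 0 < n.+1%:R * p by rewrite mulr_gt0 ?ltr0Sn.
have mu_gt0 : 0 < 1 + n%:R * p by rewrite ltr_pwDl // mulr_ge0 ?ler0n // ltW.
have mu_ratio : (1 + n%:R * p) / (n.+1%:R * p) - 1 <= (n.+1%:R * p)^-1.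
  rewrite lerBlDr ler_pdivrMr // mulrDl mulVf ?gt_eqF // mul1r lerD2l.
  by rewrite -natr1 mulrDl mul1r lerDl ltW.
have := ln_le_tangent _ _ mu_gt0 np_gt0; rewrite lnM ?posrE ?ltr0Sn // => tangent.
by rewrite lerBlDl addrA; apply: le_trans tangent _; rewrite lerD2l.
Qed.

Lemma log_drift_le2 n : log_drift n <= 2.
Proof.
apply: le_trans (lerD (log_increment_le n) (ln_mean_le0 n)) _.
by rewrite addr0 -[leRHS]/(1 + 1) lerD2l invf_le1 ?ler1n ?ltr0Sn.
Qed.

Lemma log_drift_le n : (gap_index <= n.+1)%N -> log_drift n <= - log_gap / 2.
Proof.
move=> gap_le; apply: le_trans (lerD (log_increment_le n) (ln_mean_le n)) _.
set u := n.+1%:R^-1; set w := (n.+1%:R * p)^-1.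
have np_gt0 : 0 < n.+1%:R * p by rewrite mulr_gt0 ?ltr0Sn.
have u_le_w : u <= w by rewrite lef_pV2 ?posrE ?ltr0Sn // ger_pMr ?ltr0Sn // ltW.
have w_small : 4 * w < log_gap.
  have : 4 / (p * log_gap) < n.+1%:R.
    by apply: lt_le_trans (truncnS_gt _) _; rewrite ler_nat.
  rewrite ltr_pdivrMr ?mulr_gt0 ?log_gap_gt0 // => lt4.
  rewrite -[log_gap](mulfK (lt0r_neq0 np_gt0)) ltr_pM2r ?invr_gt0 //.
  by rewrite mulrC -mulrA.
move: u_le_w w_small; rewrite /log_gap; move: (ln p) => L; lra.
Qed.

Lemma jump_gap_pays n : (n.+1 < gap_index)%N ->
  1 + 2 * p * log_coef <= p * (1 - p) ^+ n * jump_gap.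
Proof.
move=> n_lt; set K := 1 + 2 * p * log_coef.
have K_gt0 : 0 < K by rewrite addr_gt0 // mulr_gt0 ?log_coef_gt0 // mulr_gt0.
have q_gt0 : 0 < 1 - p by rewrite subr_gt0.
rewrite /jump_gap -/K mulrCA ler_pMr // invfM mulrACA mulfV ?gt_eqF // mul1r.
rewrite ler_pdivlMr ?exprn_gt0 // mul1r.
apply: ler_wiXn2l; [exact: ltW | by rewrite lerBlDr lerDl ltW | exact: ltnW (ltnW n_lt)].
Qed.

Lemma drift_above n : (i < n.+1)%N ->
  \sum_(y < n.+3) Qbar p n.+1 y * lyap y <= -1.
Proof.
move=> i_lt_n1; rewrite Qbar_row !lyap_log; [|lia|lia].
have S_le := ler_wpM2l (ltW p_gt0) (binomial_expect_lyap n).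
apply: le_trans (lerD (lerD (lexx _) S_le) (lexx _)) _.
set X := (X in X <= _).
have -> : X = p * log_coef * log_drift n - p * (1 - p) ^+ n * jump_gap.
  by rewrite /X /log_drift -!natr1; ring.
have gap_ge0 : 0 <= p * (1 - p) ^+ n * jump_gap.
  by rewrite mulr_ge0 // mulr_ge0 ?exprn_ge0 // ?subr_ge0 ltW.
have pC_gt0 : 0 < p * log_coef by rewrite mulr_gt0 ?log_coef_gt0.
case: (ltnP n.+1 gap_index) => [small|large].
  have := ler_wpM2l (ltW pC_gt0) (log_drift_le2 n).
  have := jump_gap_pays n small; rewrite -[2 * p * _]mulrA.
  by move: (p * log_coef) (p * _ * jump_gap) => pC G; lra.
have := ler_wpM2l (ltW pC_gt0) (log_drift_le n large).
rewrite [X in _ <= X]mulrA mulrN log_coefE.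
by move: (p * _ * jump_gap) gap_ge0 => G; lra.
Qed.

Lemma Qbar_lyap_drift x : (0 < x)%N -> x != i ->
  \sum_(y < x.+2) Qbar p x y * lyap y <= -1.
Proof.
case: x => // n _ n_neq_i.
by case: (ltngtP n.+1 i) n_neq_i => [/drift_below|/drift_above|->] //; rewrite eqxx.
Qed.

End QbarLyapunov.

Theorem corollary7 (R : realType) (p : R) :
  0 < p -> p < expR (-1) -> positive_recurrent (Qbar p) Nat1.
Proof.
move=> p_gt0 p_lt_expRN1 i i_gt0.
have p_lt1 := lt_trans p_lt_expRN1 (expRN1_lt1 R).
apply: (positive_recurrent_state_of_drift R (Qbar p) _ _ _ _ _ _ i i_gt0
  (lyap R p i) _ _ (3 * p)).
- exact: jump_rate_Qbar_ge0.
- exact: jump_rate_Qbar_gt0.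
- exact: Qbar_ge0.
- exact: Qbar_to0.
- exact: Qbar_skip_free.
- exact: Qbar_conservative.
- exact: lyap_ge0.
- exact: Qbar_lyap_drift.
- exact: jump_rate_Qbar_le.
Qed.
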